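(* Let $X$ be a real Banach space and let $(x_n,f_n)\in S_X\times S_{X^*}$, $n\in\mathbb{N}$, satisfy $f_n(x_n)=1$ for each $n$. Let $(y,g)\in S_X\times S_{X^*}$ satisfy $g(y)=1$, where $y$ is a point of Gâteaux smoothness of the norm. For each $k\in\mathbb{N}$ let $(c_n^{(k)})_n$ be a finitely supported sequence of non-negative reals with $\sum_n c_n^{(k)}=1$, such that (i) $\sum_n c_n^{(k)}x_n\to y$ weakly as $k\to\infty$, and (ii) $\sum_n c_n^{(k)}f_n(y)\to 1$ as $k\to\infty$. Then $P_k:=\sum_n c_n^{(k)} f_n\otimes x_n\to g\otimes y$ in the weak operator topology as $k\to\infty$, and there exist finitely supported non-negative sequences $(d_n^{(l)})_n$ with $\sum_n d_n^{(l)}=1$ ($l\in\mathbb{N}$) such that $S_l:=\sum_n d_n^{(l)}f_n\otimes x_n\to g\otimes y$ in the strong operator topology as $l\to\infty$. Moreover, if each $(x_n,f_n)$ is a Flinn pair, then $(y,g)$ is a Flinn pair.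
   Context: For $f\in X^*$ and $x\in X$, $f\otimes x: X\to X$ is the operator $v\mapsto f(v)x$. A pair $(x,f)\in S_X\times X^*$ is a Flinn pair if $\|I-f\otimes x\|=1$, where $I$ is the identity operator on $X$. WOT: $T_k\to T$ iff $\varphi(T_kv)\to\varphi(Tv)$ for all $v\in X,\varphi\in X^*$; SOT: $T_kv\to Tv$ in norm for all $v\in X$. *)

From Stdlib Require Export Reals.
Open Scope R_scope.

Record Banach := mkBanach {
  B_car :> Type;
  vzero : B_car;
  vadd : B_car -> B_car -> B_car;
  vopp : B_car -> B_car;
  vscal : R -> B_car -> B_car;
  vnorm : B_car -> R;
  vadd_assoc : forall a b c, vadd a (vadd b c) = vadd (vadd a b) c;
  vadd_comm : forall a b, vadd a b = vadd b a;
  vadd_0 : forall a, vadd a vzero = a;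
  vadd_opp : forall a, vadd a (vopp a) = vzero;
  vscal_1 : forall a, vscal 1 a = a;
  vscal_assoc : forall r s a, vscal r (vscal s a) = vscal (r * s) a;
  vscal_distr_v : forall r a b, vscal r (vadd a b) = vadd (vscal r a) (vscal r b);
  vscal_distr_r : forall r s a, vscal (r + s) a = vadd (vscal r a) (vscal s a);
  vnorm_eq0 : forall a, vnorm a = 0 -> a = vzero;
  vnorm_scal : forall r a, vnorm (vscal r a) = Rabs r * vnorm a;
  vnorm_triangle : forall a b, vnorm (vadd a b) <= vnorm a + vnorm b;
  vcomplete : forall u : nat -> B_car,
    (forall eps, eps > 0 -> exists N, forall m n, (m >= N)%nat -> (n >= N)%nat ->
       vnorm (vadd (u m) (vopp (u n))) < eps) ->
    exists l, Un_cv (fun n => vnorm (vadd (u n) (vopp l))) 0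
}.

Arguments vzero {_}. Arguments vadd {_}. Arguments vopp {_}.
Arguments vscal {_}. Arguments vnorm {_}.

Definition vsub {X : Banach} (a b : X) : X := vadd a (vopp b).

Fixpoint vsum {X : Banach} (f : nat -> X) (N : nat) : X :=
  match N with
  | O => f O
  | S n => vadd (vsum f n) (f (S n))
  end.

Definition bounded_linear {X : Banach} (f : X -> R) : Prop :=
  (forall a b, f (vadd a b) = f a + f b) /\
  (forall r a, f (vscal r a) = r * f a) /\
  (exists C, forall a, Rabs (f a) <= C * vnorm a).

Definition dual_norm_is {X : Banach} (f : X -> R) (r : R) : Prop :=
  is_lub (fun t => exists v : X, vnorm v <= 1 /\ t = Rabs (f v)) r.

Definition op_norm_is {X : Banach} (T : X -> X) (r : R) : Prop :=
  is_lub (fun t => exists v : X, vnorm v <= 1 /\ t = vnorm (T v)) r.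

(* f (x) x : v |-> f(v) x *)
Definition rank_one {X : Banach} (f : X -> R) (x : X) : X -> X :=
  fun v => vscal (f v) x.

Definition in_sphere {X : Banach} (x : X) : Prop := vnorm x = 1.
Definition in_dual_sphere {X : Banach} (f : X -> R) : Prop :=
  bounded_linear f /\ dual_norm_is f 1.

Definition flinn_pair {X : Banach} (x : X) (f : X -> R) : Prop :=
  in_sphere x /\ bounded_linear f /\
  op_norm_is (fun v => vsub v (rank_one f x v)) 1.

Definition gateaux_smooth {X : Banach} (y : X) : Prop :=
  forall h : X, exists l,
    derivable_pt_lim (fun t => vnorm (vadd y (vscal t h))) 0 l.

Definition weak_cv {X : Banach} (u : nat -> X) (y : X) : Prop :=
  forall phi : X -> R, bounded_linear phi -> Un_cv (fun k => phi (u k)) (phi y).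

Definition wot_cv {X : Banach} (T : nat -> X -> X) (S : X -> X) : Prop :=
  forall (v : X) (phi : X -> R), bounded_linear phi ->
    Un_cv (fun k => phi (T k v)) (phi (S v)).

Definition sot_cv {X : Banach} (T : nat -> X -> X) (S : X -> X) : Prop :=
  forall v : X, Un_cv (fun k => vnorm (vsub (T k v) (S v))) 0.

Definition fin_prob (c : nat -> R) (N : nat) : Prop :=
  (forall n, 0 <= c n) /\ (forall n, (n > N)%nat -> c n = 0) /\
  sum_f_R0 c N = 1.

Definition conv_op {X : Banach} (c : nat -> R) (N : nat)
  (x : nat -> X) (f : nat -> X -> R) : X -> X :=
  fun v => vsum (fun n => vscal (c n) (rank_one (f n) (x n) v)) N.

From Stdlib Require Import Reals Lra Lia Classical ClassicalEpsilon FunctionalExtensionality.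
Open Scope R_scope.

(* The heart of the argument is a quantitative consequence of Gateaux smoothness
   ([smooth_defect_bound]): for every [v] and [eps] there is [K] such that every
   functional [h] of the dual ball satisfies |h v - g v| <= eps + K (1 - h y).
   Writing [P v - g(v) y = sum_n d_n (f_n v - g v) x_n + g(v) (sum_n d_n x_n - y)]
   ([conv_op_decomp]) and averaging the bound with the weights [d], the error of
   an averaged operator [P] at [v] is controlled by [1 - sum_n d_n f_n(y)] and by
   the distance from the barycentre [sum_n d_n x_n] to [y].
   (a) With the given weights [c^(k)] both quantities tend to zero weakly, which
       gives WOT convergence ([wot_convergence]).
   (b) Mazur's lemma, proved from a Hahn-Banach separation theorem (itself derived
       from the Bourbaki-Witt fixed point theorem), produces convex combinations
       [d^(l)] of the [c^(k)] whose barycentres converge in norm; the same estimate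
       then gives SOT convergence ([sot_convergence]).
   (c) [I - P_l] is a convex combination of the [I - f_n (x) x_n], so it has norm
       at most one; this passes to the strong limit [I - g (x) y], which is a
       nonzero projection and hence has norm exactly one ([flinn_pair_limit]). *)

Arguments vadd_assoc {_}. Arguments vadd_comm {_}. Arguments vadd_0 {_}.
Arguments vadd_opp {_}. Arguments vscal_1 {_}. Arguments vscal_assoc {_}.
Arguments vscal_distr_v {_}. Arguments vscal_distr_r {_}. Arguments vnorm_eq0 {_}.
Arguments vnorm_scal {_}. Arguments vnorm_triangle {_}.

Section VectorAlgebra.
Context {X : Banach}.
Implicit Types a b c d v w : X.

Lemma vadd_0l a : vadd vzero a = a.
Proof. rewrite vadd_comm; apply vadd_0. Qed.

Lemma vadd_cancel_l a b c : vadd a b = vadd a c -> b = c.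
Proof.
  intros H.
  assert (H2 : vadd (vopp a) (vadd a b) = vadd (vopp a) (vadd a c)) by now rewrite H.
  rewrite !vadd_assoc, (vadd_comm (vopp a) a), vadd_opp, !vadd_0l in H2. exact H2.
Qed.

Lemma vscal_0l a : vscal 0 a = vzero.
Proof. apply (vadd_cancel_l (vscal 0 a)). rewrite vadd_0, <- vscal_distr_r. f_equal; ring. Qed.

Lemma vscal_0r r : vscal r (@vzero X) = vzero.
Proof. rewrite <- (vscal_0l vzero), vscal_assoc. f_equal; ring. Qed.

Lemma vopp_scal a : vopp a = vscal (-1) a.
Proof.
  apply (vadd_cancel_l a). rewrite vadd_opp. rewrite <- (vscal_1 a) at 1.
  rewrite <- vscal_distr_r. replace (1 + -1) with 0 by ring. now rewrite vscal_0l.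
Qed.

Lemma vopp_add a b : vopp (vadd a b) = vadd (vopp a) (vopp b).
Proof. rewrite !vopp_scal. apply vscal_distr_v. Qed.

Lemma vopp_opp a : vopp (vopp a) = a.
Proof. rewrite !vopp_scal, vscal_assoc. replace (-1 * -1) with 1 by ring. apply vscal_1. Qed.

Lemma vadd_swap a b c d : vadd (vadd a b) (vadd c d) = vadd (vadd a c) (vadd b d).
Proof. rewrite <- !vadd_assoc. f_equal. rewrite !vadd_assoc. f_equal. apply vadd_comm. Qed.

Lemma vsub_diag a : vsub a a = vzero.
Proof. apply vadd_opp. Qed.

Lemma vsub_0r a : vsub a vzero = a.
Proof. unfold vsub. rewrite vopp_scal, vscal_0r. apply vadd_0. Qed.

Lemma vsub_eq0 a b : vsub a b = vzero -> a = b.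
Proof.
  unfold vsub. intros H. assert (E : vadd (vadd a (vopp b)) b = vadd vzero b) by now rewrite H.
  rewrite <- vadd_assoc, (vadd_comm (vopp b)), vadd_opp, vadd_0, vadd_0l in E. exact E.
Qed.

Lemma vsub_add a b c d : vsub (vadd a b) (vadd c d) = vadd (vsub a c) (vsub b d).
Proof. unfold vsub. rewrite vopp_add. apply vadd_swap. Qed.

Lemma vsub_scal t a b : vsub (vscal t a) (vscal t b) = vscal t (vsub a b).
Proof. unfold vsub. rewrite vscal_distr_v, !vopp_scal, !vscal_assoc, Rmult_comm. reflexivity. Qed.

Lemma vsub_scal_l r s a : vsub (vscal r a) (vscal s a) = vscal (r - s) a.
Proof. unfold vsub. rewrite vopp_scal, vscal_assoc, <- vscal_distr_r. f_equal. ring. Qed.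

Lemma vsub_chain a b c : vadd (vsub a b) (vsub b c) = vsub a c.
Proof.
  unfold vsub. rewrite <- vadd_assoc, (vadd_assoc (vopp b)), (vadd_comm (vopp b) b), vadd_opp, vadd_0l.
  reflexivity.
Qed.

Lemma vnorm_0 : vnorm (@vzero X) = 0.
Proof. rewrite <- (vscal_0l vzero), vnorm_scal, Rabs_R0. ring. Qed.

Lemma vnorm_opp a : vnorm (vopp a) = vnorm a.
Proof. rewrite vopp_scal, vnorm_scal, Rabs_left by lra. ring. Qed.

Lemma vnorm_nonneg a : 0 <= vnorm a.
Proof. pose proof (vnorm_triangle a (vopp a)). rewrite vadd_opp, vnorm_0, vnorm_opp in H. lra. Qed.

Lemma vnorm_sub_sym a b : vnorm (vsub a b) = vnorm (vsub b a).
Proof. unfold vsub. rewrite <- vnorm_opp, vopp_add, vopp_opp, vadd_comm. reflexivity. Qed.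

Lemma vnorm_sub_triangle a b c : vnorm (vsub a c) <= vnorm (vsub a b) + vnorm (vsub b c).
Proof. rewrite <- (vsub_chain a b c). apply vnorm_triangle. Qed.

Lemma vnorm_sub_ge a b : vnorm a - vnorm b <= vnorm (vsub a b).
Proof. pose proof (vnorm_sub_triangle a b vzero). rewrite !vsub_0r in H. lra. Qed.

Lemma vnorm_normalize a : vnorm a <> 0 -> vnorm (vscal (/ vnorm a) a) = 1.
Proof.
  intros Ha. pose proof (vnorm_nonneg a).
  rewrite vnorm_scal, Rabs_right by (apply Rle_ge, Rlt_le, Rinv_0_lt_compat; lra). field. exact Ha.
Qed.

End VectorAlgebra.

Section FiniteSums.
Context {X : Banach}.
Implicit Types (u w : nat -> X) (a : nat -> R).

Lemma vsum_ext u w N : (forall n, (n <= N)%nat -> u n = w n) -> vsum u N = vsum w N.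
Proof.
  induction N; intros H; simpl; [apply H; lia|].
  rewrite IHN by (intros; apply H; lia). rewrite H by lia. reflexivity.
Qed.

Lemma vsum_add u w N : vsum (fun n => vadd (u n) (w n)) N = vadd (vsum u N) (vsum w N).
Proof. induction N; simpl; [reflexivity|]. rewrite IHN. apply vadd_swap. Qed.

Lemma vsum_scal u r N : vscal r (vsum u N) = vsum (fun n => vscal r (u n)) N.
Proof. induction N; simpl; [reflexivity|]. rewrite vscal_distr_v, IHN. reflexivity. Qed.

Lemma vsum_sub u w N : vsub (vsum u N) (vsum w N) = vsum (fun n => vsub (u n) (w n)) N.
Proof.
  unfold vsub. rewrite vopp_scal, vsum_scal, <- vsum_add.
  apply vsum_ext. intros. rewrite vopp_scal. reflexivity.
Qed.

Lemma vsum_const a (v : X) N : vsum (fun n => vscal (a n) v) N = vscal (sum_f_R0 a N) v.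
Proof. induction N; simpl; [reflexivity|]. rewrite IHN, vscal_distr_r. reflexivity. Qed.

Lemma vsum_norm u N : vnorm (vsum u N) <= sum_f_R0 (fun n => vnorm (u n)) N.
Proof. induction N; simpl; [lra|]. eapply Rle_trans; [apply vnorm_triangle|lra]. Qed.

Lemma vsum_tail u N M : (forall n, (n > N)%nat -> u n = vzero) -> (N <= M)%nat ->
  vsum u M = vsum u N.
Proof. intros H HM. induction HM; simpl; [reflexivity|]. rewrite IHHM, H by lia. apply vadd_0. Qed.

Lemma vsum_exchange (F : nat -> nat -> X) L M :
  vsum (fun n => vsum (fun k => F k n) L) M = vsum (fun k => vsum (fun n => F k n) M) L.
Proof.
  induction L; simpl; [reflexivity|].
  rewrite (vsum_add (fun n => vsum (fun k => F k n) L) (fun n => F (S L) n)), IHL. reflexivity.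
Qed.

End FiniteSums.

Lemma sum_tail (a : nat -> R) N M : (forall n, (n > N)%nat -> a n = 0) -> (N <= M)%nat ->
  sum_f_R0 a M = sum_f_R0 a N.
Proof. intros H HM. induction HM; simpl; [reflexivity|]. rewrite IHHM, H by lia. ring. Qed.

Lemma sum_exchange (F : nat -> nat -> R) L M :
  sum_f_R0 (fun n => sum_f_R0 (fun k => F k n) L) M = sum_f_R0 (fun k => sum_f_R0 (fun n => F k n) M) L.
Proof.
  induction L; simpl; [reflexivity|].
  rewrite (plus_sum (fun n => sum_f_R0 (fun k => F k n) L) (fun n => F (S L) n)), IHL. reflexivity.
Qed.

Lemma sum_scal_l (a : nat -> R) r N : r * sum_f_R0 a N = sum_f_R0 (fun n => r * a n) N.
Proof. rewrite scal_sum. apply sum_eq. intros; ring. Qed.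

Section Functionals.
Context {X : Banach}.
Implicit Types (a b u : X) (h : X -> R).

Definition linear_functional (h : X -> R) : Prop :=
  (forall a b, h (vadd a b) = h a + h b) /\ (forall r a, h (vscal r a) = r * h a).

Definition dual_ball (h : X -> R) : Prop :=
  linear_functional h /\ forall u, Rabs (h u) <= vnorm u.

Lemma bounded_linear_linear (h : X -> R) : bounded_linear h -> linear_functional h.
Proof. intros [A [B _]]. split; assumption. Qed.

Lemma linear_0 h : linear_functional h -> h vzero = 0.
Proof. intros [_ B]. rewrite <- (vscal_0l vzero), B. ring. Qed.

Lemma linear_sub h a b : linear_functional h -> h (vsub a b) = h a - h b.
Proof. intros [A B]. unfold vsub. rewrite A, vopp_scal, B. ring. Qed.

Lemma linear_vsum h (u : nat -> X) N : linear_functional h ->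
  h (vsum u N) = sum_f_R0 (fun n => h (u n)) N.
Proof. intros L. induction N; simpl; [reflexivity|]. rewrite (proj1 L), IHN. reflexivity. Qed.

Lemma bounded_linear_bound h : bounded_linear h ->
  exists C, 0 <= C /\ forall u, Rabs (h u) <= C * vnorm u.
Proof.
  intros [_ [_ [C HC]]]. exists (Rabs C). split; [apply Rabs_pos|].
  intros u. eapply Rle_trans; [apply HC|].
  apply Rmult_le_compat_r; [apply vnorm_nonneg|apply RRle_abs].
Qed.

Lemma dual_ball_bounded h : dual_ball h -> bounded_linear h.
Proof.
  intros [[A B] H]. split; [exact A|split; [exact B|]]. exists 1. intros u. rewrite Rmult_1_l. auto.
Qed.

Lemma dual_sphere_ball h : in_dual_sphere h -> dual_ball h.
Proof.
  intros [Hb [Hub _]]. pose proof (bounded_linear_linear h Hb) as L. split; [exact L|].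
  intros u. destruct (Req_dec (vnorm u) 0) as [E|E].
  - apply vnorm_eq0 in E. subst. rewrite linear_0, vnorm_0, Rabs_R0 by exact L. lra.
  - pose proof (vnorm_nonneg u).
    assert (Hw : Rabs (h (vscal (/ vnorm u) u)) <= 1).
    { apply Hub. exists (vscal (/ vnorm u) u). split; [rewrite vnorm_normalize by exact E; lra|reflexivity]. }
    rewrite (proj2 L), Rabs_mult, Rabs_right in Hw by (apply Rle_ge, Rlt_le, Rinv_0_lt_compat; lra).
    apply (Rmult_le_compat_l (vnorm u)) in Hw; [|lra].
    rewrite <- Rmult_assoc, Rinv_r in Hw by exact E. lra.
Qed.

Lemma dual_ball_le h u : dual_ball h -> h u <= vnorm u.
Proof. intros [_ H]. eapply Rle_trans; [apply RRle_abs|apply H]. Qed.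

End Functionals.

Lemma Un_cv_dist (u : nat -> R) l : Un_cv u l <-> Un_cv (fun n => Rabs (u n - l)) 0.
Proof.
  unfold Un_cv, R_dist. split; intros H eps Heps; destruct (H eps Heps) as [N HN];
    exists N; intros n Hn; specialize (HN n Hn); rewrite Rminus_0_r, Rabs_Rabsolu in *; exact HN.
Qed.

Lemma Un_cv_harmonic (u : nat -> R) : (forall n, Rabs (u n) <= / (INR n + 1)) -> Un_cv u 0.
Proof.
  intros H eps Heps. destruct (archimed_cor1 eps Heps) as [N [HN HN0]].
  exists N. intros n Hn. unfold R_dist. rewrite Rminus_0_r. eapply Rle_lt_trans; [apply H|].
  eapply Rle_lt_trans; [|exact HN]. apply Rinv_le_contravar.
  - apply lt_0_INR; lia.
  - apply le_INR in Hn. lra.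
Qed.

(* [A / (A + 1) < 1]: the share of [eps / 3] needed in [Un_cv_squeeze] *)
Lemma third_share (A eps : R) : 0 <= A -> eps > 0 -> A * (eps / (3 * (A + 1))) < eps / 3.
Proof.
  intros HA Heps. replace (A * (eps / (3 * (A + 1)))) with (eps / 3 * (A / (A + 1))) by (field; lra).
  rewrite <- (Rmult_1_r (eps / 3)) at 2. apply Rmult_lt_compat_l; [lra|].
  apply (Rmult_lt_reg_r (A + 1)); [lra|]. unfold Rdiv. rewrite Rmult_assoc, Rinv_l; lra.
Qed.

Lemma Un_cv_squeeze (a b e : nat -> R) (G : R) : 0 <= G -> (forall k, 0 <= a k) ->
  Un_cv b 0 -> Un_cv e 0 ->
  (forall eps, eps > 0 -> exists K, 0 <= K /\ forall k, a k <= eps + K * b k + G * e k) ->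
  Un_cv a 0.
Proof.
  intros HG Ha Hb He Hbound eps Heps.
  destruct (Hbound (eps / 3) ltac:(lra)) as [K [HK HaK]].
  destruct (Hb (eps / (3 * (K + 1)))) as [N1 HN1]. { apply Rdiv_lt_0_compat; lra. }
  destruct (He (eps / (3 * (G + 1)))) as [N2 HN2]. { apply Rdiv_lt_0_compat; lra. }
  exists (max N1 N2). intros k Hk. specialize (HN1 k ltac:(lia)). specialize (HN2 k ltac:(lia)).
  unfold R_dist in *. rewrite Rminus_0_r in *. rewrite Rabs_right by (apply Rle_ge, Ha).
  apply Rabs_def2 in HN1 as [HN1 _]. apply Rabs_def2 in HN2 as [HN2 _].
  assert (EK : K * b k <= K * (eps / (3 * (K + 1)))) by (apply Rmult_le_compat_l; lra).
  assert (EG : G * e k <= G * (eps / (3 * (G + 1)))) by (apply Rmult_le_compat_l; lra).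
  pose proof (third_share K eps HK Heps). pose proof (third_share G eps HG Heps).
  specialize (HaK k). lra.
Qed.

Section SmoothPoint.
Context {X : Banach} (y : X) (hsmooth : gateaux_smooth y) (hy : vnorm y = 1).

(* At a smooth point, the functionals of the dual ball that almost norm [y] are
   almost equal at any [v]: their value is close to the directional derivative
   of the norm at [y] in direction [v]. *)
Lemma smooth_point_stable (v : X) eps : eps > 0 ->
  exists del l, del > 0 /\ forall h, dual_ball h -> h y > 1 - del -> Rabs (h v - l) < eps.
Proof.
  intros Heps. destruct (hsmooth v) as [l Hl].
  destruct (Hl (eps/2) ltac:(lra)) as [[dl Hdl] Hd]. simpl in Hd.
  set (t := dl/2). assert (Ht : 0 < t) by (unfold t; lra).
  assert (F0 : vnorm (vadd y (vscal 0 v)) = 1) by (rewrite vscal_0l, vadd_0; auto).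
  pose proof (Hd t ltac:(lra) ltac:(rewrite Rabs_right; unfold t; lra)) as D1.
  pose proof (Hd (-t) ltac:(lra) ltac:(rewrite Rabs_left; unfold t; lra)) as D2.
  rewrite Rplus_0_l, F0 in D1, D2.
  set (A := vnorm (vadd y (vscal t v))) in *. set (B := vnorm (vadd y (vscal (-t) v))) in *.
  assert (EA : A - 1 < t * (l + eps/2)).
  { apply Rabs_def2 in D1. replace (A - 1) with (t * ((A-1)/t)) by (field; lra).
    apply Rmult_lt_compat_l; lra. }
  assert (EB : B - 1 < t * (- l + eps/2)).
  { apply Rabs_def2 in D2. replace (B - 1) with ((-t) * ((B-1)/(-t))) by (field; lra).
    replace (t * (-l + eps/2)) with ((-t) * (l - eps/2)) by ring.
    apply Rmult_lt_gt_compat_neg_l; lra. }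
  exists (t * (eps/2)), l. split; [nra|]. intros h Hh Hhy.
  pose proof (dual_ball_le h (vadd y (vscal t v)) Hh) as H1.
  pose proof (dual_ball_le h (vadd y (vscal (-t) v)) Hh) as H2.
  fold A in H1. fold B in H2. destruct Hh as [[Ha Hs] _]. rewrite Ha, Hs in H1, H2.
  assert (t * h v < t * (l + eps)) by lra. assert (t * (- h v) < t * (- l + eps)) by lra.
  apply Rmult_lt_reg_l in H; auto. apply Rmult_lt_reg_l in H0; auto.
  apply Rabs_def1; lra.
Qed.

Lemma smooth_defect_bound (g : X -> R) (v : X) eps : dual_ball g -> g y = 1 -> eps > 0 ->
  exists K, 0 <= K /\ forall h, dual_ball h -> Rabs (h v - g v) <= eps + K * (1 - h y).
Proof.
  intros Hg Hgy Heps.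
  destruct (smooth_point_stable v (eps/2) ltac:(lra)) as [del [l [Hdel Hd]]].
  pose proof (vnorm_nonneg v).
  assert (HK : 0 <= 2 * vnorm v / del) by (apply Rmult_le_pos; [lra|left; apply Rinv_0_lt_compat; lra]).
  exists (2 * vnorm v / del). split; [exact HK|]. intros h Hh.
  pose proof (dual_ball_le h y Hh) as Fy. rewrite hy in Fy.
  destruct (Rlt_dec (1 - del) (h y)) as [Hl|Hl].
  - pose proof (Hd h Hh Hl). pose proof (Hd g Hg ltac:(lra)).
    assert (Rabs (h v - g v) < eps).
    { replace (h v - g v) with ((h v - l) - (g v - l)) by ring.
      eapply Rle_lt_trans; [apply Rabs_triang|]. rewrite Rabs_Ropp. lra. }
    assert (0 <= 2 * vnorm v / del * (1 - h y)) by (apply Rmult_le_pos; lra). lra.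
  - assert (Rabs (h v - g v) <= 2 * vnorm v).
    { eapply Rle_trans; [apply Rabs_triang|]. rewrite Rabs_Ropp.
      pose proof (proj2 Hh v). pose proof (proj2 Hg v). lra. }
    assert (2 * vnorm v <= 2 * vnorm v / del * (1 - h y)).
    { replace (2 * vnorm v / del * (1 - h y)) with (2 * vnorm v * ((1 - h y) / del)) by (field; lra).
      rewrite <- (Rmult_1_r (2 * vnorm v)) at 1. apply Rmult_le_compat_l; [lra|].
      apply (Rmult_le_reg_r del); [lra|]. unfold Rdiv. rewrite Rmult_assoc, Rinv_l; lra. }
    lra.
Qed.

End SmoothPoint.

Section ConvexOperators.
Context {X : Banach} (x : nat -> X) (f : nat -> X -> R) (y : X) (g : X -> R).

Definition barycenter (d : nat -> R) (M : nat) : X := vsum (fun n => vscal (d n) (x n)) M.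

Lemma conv_op_apply d M v : conv_op d M x f v = vsum (fun n => vscal (d n * f n v) (x n)) M.
Proof. unfold conv_op, rank_one. apply vsum_ext. intros. apply vscal_assoc. Qed.

Lemma conv_op_decomp d M v :
  vsub (conv_op d M x f v) (rank_one g y v) =
  vadd (vsum (fun n => vscal (d n * (f n v - g v)) (x n)) M) (vscal (g v) (vsub (barycenter d M) y)).
Proof.
  unfold rank_one, barycenter. rewrite <- vsub_scal, vsum_scal.
  rewrite <- (vsub_chain _ (vsum (fun n => vscal (g v) (vscal (d n) (x n))) M)). f_equal.
  rewrite conv_op_apply, vsum_sub. apply vsum_ext. intros n _.
  rewrite vscal_assoc, vsub_scal_l. f_equal. ring.
Qed.

Hypothesis hx : forall n, vnorm (x n) = 1.

Lemma conv_op_norm_bound d M v : fin_prob d M ->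
  vnorm (vsub (conv_op d M x f v) (rank_one g y v)) <=
  sum_f_R0 (fun n => d n * Rabs (f n v - g v)) M + Rabs (g v) * vnorm (vsub (barycenter d M) y).
Proof.
  intros [D0 _]. rewrite conv_op_decomp. eapply Rle_trans; [apply vnorm_triangle|].
  apply Rplus_le_compat.
  - eapply Rle_trans; [apply vsum_norm|]. right. apply sum_eq. intros n _.
    rewrite vnorm_scal, hx, Rabs_mult, Rabs_right by (apply Rle_ge, D0). ring.
  - rewrite vnorm_scal. lra.
Qed.

Lemma conv_op_functional_bound d M v (phi : X -> R) C : fin_prob d M ->
  linear_functional phi -> (forall n, Rabs (phi (x n)) <= C) ->
  Rabs (phi (conv_op d M x f v) - phi (rank_one g y v)) <=
  C * sum_f_R0 (fun n => d n * Rabs (f n v - g v)) M + Rabs (g v) * Rabs (phi (barycenter d M) - phi y).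
Proof.
  intros [D0 _] Lp HC. rewrite <- linear_sub, conv_op_decomp by exact Lp.
  rewrite (proj1 Lp), (proj2 Lp), linear_vsum, linear_sub by exact Lp.
  eapply Rle_trans; [apply Rabs_triang|]. rewrite (Rabs_mult (g v)). apply Rplus_le_compat_r.
  eapply Rle_trans; [apply sum_f_R0_triangle|]. rewrite sum_scal_l. apply sum_Rle. intros n _.
  rewrite (proj2 Lp), !Rabs_mult, (Rabs_right (d n)) by (apply Rle_ge, D0).
  pose proof (Rabs_pos (f n v - g v)). pose proof (D0 n).
  rewrite (Rmult_comm C). apply Rmult_le_compat_l; [apply Rmult_le_pos|]; auto.
Qed.

Hypothesis hf : forall n, dual_ball (f n).

Lemma weighted_defect_bound d M v eps K : fin_prob d M ->
  (forall h, dual_ball h -> Rabs (h v - g v) <= eps + K * (1 - h y)) ->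
  sum_f_R0 (fun n => d n * Rabs (f n v - g v)) M <= eps + K * (1 - sum_f_R0 (fun n => d n * f n y) M).
Proof.
  intros Hd HK. destruct Hd as [D0 [_ D2]].
  eapply Rle_trans.
  { apply sum_Rle with (Bn := fun n => d n * eps + K * (d n - d n * f n y)).
    intros n _. replace (d n * eps + K * (d n - d n * f n y)) with (d n * (eps + K * (1 - f n y))) by ring.
    apply Rmult_le_compat_l; auto. }
  rewrite plus_sum, <- scal_sum, D2, <- sum_scal_l, minus_sum, D2. lra.
Qed.

End ConvexOperators.

Lemma wot_convergence {X : Banach} (x : nat -> X) (f : nat -> X -> R)
  (y : X) (g : X -> R) (c : nat -> nat -> R) (N : nat -> nat)
  (hx : forall n, vnorm (x n) = 1) (hf : forall n, dual_ball (f n))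
  (hy : vnorm y = 1) (hg : dual_ball g) (hgy : g y = 1) (hsmooth : gateaux_smooth y)
  (hc : forall k, fin_prob (c k) (N k))
  (hi : weak_cv (fun k => barycenter x (c k) (N k)) y)
  (hii : Un_cv (fun k => sum_f_R0 (fun n => c k n * f n y) (N k)) 1) :
  wot_cv (fun k => conv_op (c k) (N k) x f) (rank_one g y).
Proof.
  intros v phi Hphi. pose proof (bounded_linear_linear phi Hphi) as Lp.
  destruct (bounded_linear_bound phi Hphi) as [C [HC0 HC]].
  apply (proj2 (Un_cv_dist _ _)).
  apply (Un_cv_squeeze _ (fun k => Rabs (sum_f_R0 (fun n => c k n * f n y) (N k) - 1))
           (fun k => Rabs (phi (barycenter x (c k) (N k)) - phi y)) (Rabs (g v)));
    [apply Rabs_pos|intros; apply Rabs_pos|apply (proj1 (Un_cv_dist _ _)), hii|apply (proj1 (Un_cv_dist _ _)), (hi phi Hphi)|].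
  intros eps Heps.
  destruct (smooth_defect_bound y hsmooth hy g v (eps / (C + 1)) hg hgy) as [K [HK HKb]].
  { apply Rdiv_lt_0_compat; lra. }
  exists ((C + 1) * K). split; [nra|]. intros k.
  set (s := sum_f_R0 (fun n => c k n * f n y) (N k)).
  eapply Rle_trans.
  { apply (conv_op_functional_bound x f y g (c k) (N k) v phi (C + 1) (hc k) Lp).
    intros n. specialize (HC (x n)). rewrite hx in HC. lra. }
  pose proof (weighted_defect_bound f y g hf (c k) (N k) v _ K (hc k) HKb) as Hw. fold s in Hw.
  assert (K * (1 - s) <= K * Rabs (s - 1)).
  { apply Rmult_le_compat_l; [exact HK|]. rewrite Rabs_minus_sym. apply RRle_abs. }
  apply Rplus_le_compat_r.
  apply Rle_trans with ((C + 1) * (eps / (C + 1) + K * (1 - s))); [apply Rmult_le_compat_l; lra|].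
  replace ((C + 1) * (eps / (C + 1) + K * (1 - s))) with (eps + (C + 1) * (K * (1 - s))) by (field; lra).
  nra.
Qed.

Definition is_chain {T : Type} (le : T -> T -> Prop) (C : T -> Prop) : Prop :=
  forall a b, C a -> C b -> le a b \/ le b a.

(* The least subset
   containing [x0] and closed under [next] and suprema of chains (the "tower")
   is shown to be a chain; its supremum is the fixed point.  This replaces
   Zorn's lemma in the proof of the Hahn-Banach theorem. *)
Section BourbakiWitt.
Context {T : Type} (le : T -> T -> Prop) (ok : T -> Prop) (x0 : T)
  (next : T -> T) (sup : (T -> Prop) -> T).
Hypothesis ord_refl : forall a, le a a.
Hypothesis ord_trans : forall a b c, le a b -> le b c -> le a c.
Hypothesis ord_antisym : forall a b, le a b -> le b a -> a = b.
Hypothesis ok_x0 : ok x0.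
Hypothesis ok_next : forall a, ok a -> ok (next a).
Hypothesis next_ge : forall a, ok a -> le a (next a).
Hypothesis sup_spec : forall C, is_chain le C -> (forall a, C a -> ok a) ->
  ok (sup C) /\ le x0 (sup C) /\ (forall a, C a -> le a (sup C)) /\
  (forall u, le x0 u -> (forall a, C a -> le a u) -> le (sup C) u).

Definition tower_closed (A : T -> Prop) : Prop :=
  A x0 /\ (forall a, A a -> A (next a)) /\
  (forall C, is_chain le C -> (forall a, C a -> A a) -> A (sup C)).

Definition tower (a : T) : Prop := forall A, tower_closed A -> A a.

Lemma tower_ind (A : T -> Prop) : tower_closed A -> forall a, tower a -> A a.
Proof. intros HA a Ha. apply Ha, HA. Qed.

Lemma tower_is_closed : tower_closed tower.
Proof.
  split; [|split].
  - intros A HA. apply HA.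
  - intros a Ha A HA. apply HA, Ha, HA.
  - intros C Hc HC A HA. apply HA; auto. intros a Ca. apply HC; auto.
Qed.

Lemma tower_ok a : tower a -> ok a.
Proof.
  apply tower_ind. split; [auto|split; [auto|]]. intros C Hc HC. apply (sup_spec C Hc HC).
Qed.

Lemma tower_ge_x0 a : tower a -> le x0 a.
Proof.
  intros Ha. apply (tower_ind (fun a => ok a /\ le x0 a)); auto.
  split; [split; auto|split].
  - intros b [Hb1 Hb2]. split; auto. eapply ord_trans; eauto.
  - intros C Hc HC. assert (HC' : forall a, C a -> ok a) by (intros; apply HC; auto).
    destruct (sup_spec C Hc HC') as [A1 [A2 _]]. auto.
Qed.

Definition extreme (c : T) : Prop := forall a, tower a -> le a c -> a <> c -> le (next a) c.

Lemma extreme_split c : tower c -> extreme c -> forall a, tower a -> le a c \/ le (next c) a.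
Proof.
  intros Mc Ec a Ma.
  apply (tower_ind (fun a => tower a /\ (le a c \/ le (next c) a))); [|exact Ma].
  destruct tower_is_closed as [T0 [Tn Ts]].
  split; [|split].
  - split; [exact T0|left; apply tower_ge_x0; auto].
  - intros b [Mb [Hb|Hb]]; split; auto.
    + destruct (classic (b = c)) as [E|E].
      * subst. right. apply ord_refl.
      * left. apply Ec; auto.
    + right. eapply ord_trans; [exact Hb|apply next_ge, tower_ok; auto].
  - intros C Hc HC. split; [apply Ts; auto; intros; apply HC; auto|].
    assert (HC' : forall a, C a -> ok a) by (intros; apply tower_ok, HC; auto).
    destruct (sup_spec C Hc HC') as [_ [_ [S3 S4]]].
    destruct (classic (exists b, C b /\ le (next c) b)) as [[b [Cb Hb]]|NE].
    + right. eapply ord_trans; eauto.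
    + left. apply S4; [apply tower_ge_x0; auto|].
      intros b Cb. destruct (HC b Cb) as [_ [H|H]]; auto. exfalso; eauto.
Qed.

(* the extreme tower elements form a tower-closed set, so they exhaust the tower *)
Lemma tower_extreme c : tower c -> extreme c.
Proof.
  intros Mc. apply (tower_ind (fun c => tower c /\ extreme c)); [|exact Mc].
  clear c Mc. destruct tower_is_closed as [T0 [Tn Ts]].
  split; [|split].
  - split; auto. intros a Ma H1 H2. exfalso. apply H2, ord_antisym; auto. apply tower_ge_x0; auto.
  - intros c [Mc Ec]. split; auto. intros a Ma H1 H2.
    destruct (extreme_split c Mc Ec a Ma) as [H|H]; [|exfalso; apply H2, ord_antisym; auto].
    destruct (classic (a = c)) as [E|E].
    + subst. apply ord_refl.
    + eapply ord_trans; [apply Ec; auto|apply next_ge, tower_ok; auto].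
  - intros C Hc HC. assert (Ms : tower (sup C)) by (apply Ts; auto; intros; apply HC; auto).
    split; auto.
    assert (HC' : forall a, C a -> ok a) by (intros; apply tower_ok, HC; auto).
    destruct (sup_spec C Hc HC') as [_ [_ [S3 S4]]].
    intros a Ma H1 H2.
    destruct (classic (exists c, C c /\ ~ le (next c) a)) as [[c [Cc Hc1]]|NE].
    + destruct (HC c Cc) as [Mc Ec].
      destruct (extreme_split c Mc Ec a Ma) as [H|H]; [|contradiction].
      destruct (classic (a = c)) as [E|E].
      * subst a. destruct (extreme_split c Mc Ec (sup C) Ms) as [H3|H3]; auto.
        exfalso. apply H2, ord_antisym; auto.
      * eapply ord_trans; [apply Ec; auto|apply S3; auto].
    + exfalso. apply H2, ord_antisym; auto. apply S4; [apply tower_ge_x0; auto|].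
      intros b Cb. destruct (classic (le (next b) a)) as [H|H]; [|exfalso; eauto].
      eapply ord_trans; [apply next_ge, HC'; auto|exact H].
Qed.

Lemma tower_chain : is_chain le tower.
Proof.
  intros a b Ma Mb. destruct (extreme_split b Mb (tower_extreme b Mb) a Ma) as [H|H]; auto.
  right. eapply ord_trans; [apply next_ge, tower_ok; auto|exact H].
Qed.

Theorem bourbaki_witt : exists s, ok s /\ next s = s.
Proof.
  destruct tower_is_closed as [_ [Tn Ts]].
  assert (Ms : tower (sup tower)) by (apply Ts; auto; apply tower_chain).
  destruct (sup_spec tower tower_chain tower_ok) as [_ [_ [S3 _]]].
  exists (sup tower). split; [apply tower_ok; auto|].
  apply ord_antisym; [apply S3, Tn, Ms|apply next_ge, tower_ok, Ms].
Qed.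

End BourbakiWitt.

(* the infimum of a nonempty set of reals bounded below *)
Definition rglb (E : R -> Prop) : R :=
  - (epsilon (inhabits 0) (fun m => is_lub (fun r => E (-r)) m)).

Lemma rglb_spec (E : R -> Prop) : (exists r, E r) -> (exists m, forall r, E r -> m <= r) ->
  (forall r, E r -> rglb E <= r) /\ (forall m, (forall r, E r -> m <= r) -> m <= rglb E).
Proof.
  intros [r0 Hr0] [m0 Hm0].
  assert (H : exists m, is_lub (fun r => E (-r)) m).
  { destruct (completeness (fun r => E (-r))) as [m Hm]; [| |exists m; exact Hm].
    - exists (- m0). intros r Hr. specialize (Hm0 _ Hr). lra.
    - exists (- r0). rewrite Ropp_involutive. auto. }
  pose proof (epsilon_spec (inhabits 0) _ H) as [H1 H2].
  unfold rglb. set (e := epsilon _ _) in *. split.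
  - intros r Er. assert (- r <= e) by (apply H1; rewrite Ropp_involutive; auto). lra.
  - intros m Hm. assert (e <= - m) by (apply H2; intros r Er; specialize (Hm _ Er); lra). lra.
Qed.

Lemma rglb_le (E : R -> Prop) r : E r -> (exists m, forall r, E r -> m <= r) -> rglb E <= r.
Proof. intros Er Hb. apply (rglb_spec E); eauto. Qed.

Lemma rglb_ge (E : R -> Prop) m : (exists r, E r) -> (forall r, E r -> m <= r) -> m <= rglb E.
Proof. intros Hne Hm. apply (rglb_spec E); eauto. Qed.

Section Sublinear.
Context {X : Banach}.
Implicit Types (a b v : X) (q : X -> R).

Definition sublinear q : Prop :=
  (forall a b, q (vadd a b) <= q a + q b) /\ (forall t a, 0 <= t -> q (vscal t a) = t * q a).

Lemma sublinear_0 q : sublinear q -> q vzero = 0.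
Proof. intros [_ H]. rewrite <- (vscal_0l vzero), H by lra. ring. Qed.

Lemma sublinear_opp q v : sublinear q -> - q (vopp v) <= q v.
Proof. intros Hq. pose proof (proj1 Hq v (vopp v)). rewrite vadd_opp, sublinear_0 in H by auto. lra. Qed.

Section InfimumSublinear.
Variable S : X -> R -> Prop.
Hypothesis S_ne : forall v, exists r, S v r.
Hypothesis S_bnd : forall v, exists m, forall r, S v r -> m <= r.
Hypothesis S_add : forall a b r1 r2, S a r1 -> S b r2 -> exists r, S (vadd a b) r /\ r <= r1 + r2.
Hypothesis S_scal : forall t a r, 0 < t -> S a r -> exists r', S (vscal t a) r' /\ r' <= t * r.
Hypothesis S_zero : S vzero 0 /\ forall r, S vzero r -> 0 <= r.

Let q v := rglb (S v).

Lemma inf_scal_le t a : 0 < t -> q (vscal t a) <= t * q a.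
Proof.
  intros Ht. assert (q (vscal t a) / t <= q a).
  { apply rglb_ge; auto. intros r Hr. destruct (S_scal t a r Ht Hr) as [r' [Hr' Hle]].
    apply (Rmult_le_reg_l t); [lra|]. replace (t * (q (vscal t a) / t)) with (q (vscal t a)) by (field; lra).
    eapply Rle_trans; [apply (rglb_le _ r'); auto|exact Hle]. }
  apply (Rmult_le_compat_l t) in H; [|lra].
  replace (t * (q (vscal t a) / t)) with (q (vscal t a)) in H by (field; lra). exact H.
Qed.

Lemma infimum_sublinear : sublinear q.
Proof.
  split.
  - intros a b.
    assert (H : forall r2, S b r2 -> q (vadd a b) - r2 <= q a).
    { intros r2 Hr2. apply rglb_ge; auto. intros r1 Hr1.
      destruct (S_add a b r1 r2 Hr1 Hr2) as [r [Hr Hle]].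
      assert (q (vadd a b) <= r) by (apply rglb_le; auto). lra. }
    assert (q (vadd a b) - q a <= q b) by (apply rglb_ge; auto; intros r2 Hr2; specialize (H r2 Hr2); lra).
    lra.
  - intros t a Ht. destruct (Req_dec t 0) as [->|E].
    + rewrite vscal_0l, Rmult_0_l. destruct S_zero as [S0 S0'].
      apply Rle_antisym; [apply rglb_le; auto|apply rglb_ge; auto].
    + apply Rle_antisym; [apply inf_scal_le; lra|].
      pose proof (inf_scal_le (/ t) (vscal t a) ltac:(apply Rinv_0_lt_compat; lra)) as H.
      rewrite vscal_assoc, Rinv_l, vscal_1 in H by exact E.
      apply (Rmult_le_compat_l t) in H; [|lra].
      rewrite <- Rmult_assoc, Rinv_r, Rmult_1_l in H by exact E. exact H.
Qed.

End InfimumSublinear.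

End Sublinear.

Section HahnBanach.
Context {X : Banach}.
Implicit Types (a b v : X) (p q : X -> R).

(* [shift q a0 v = inf_{s >= 0} q(v + s a0) - s q(a0)]: a sublinear functional below [q]
   taking the value [- q a0] at [- a0] *)
Definition shift_set q (a0 v : X) (r : R) : Prop :=
  exists s, 0 <= s /\ r = q (vadd v (vscal s a0)) - s * q a0.

Definition shift q (a0 v : X) : R := rglb (shift_set q a0 v).

Lemma shift_set_bounded q a0 v : sublinear q -> exists m, forall r, shift_set q a0 v r -> m <= r.
Proof.
  intros Hq. exists (- q (vopp v)). intros r [s [Hs ->]].
  pose proof (proj1 Hq (vadd v (vscal s a0)) (vopp v)) as H.
  rewrite vadd_comm, vadd_assoc, (vadd_comm (vopp v) v), vadd_opp, vadd_0l, (proj2 Hq) in H by auto.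
  lra.
Qed.

Lemma shift_set_0 q a0 v : sublinear q -> shift_set q a0 v (q v).
Proof. intros Hq. exists 0. split; [lra|]. rewrite vscal_0l, vadd_0. ring. Qed.

Lemma shift_sublinear q a0 : sublinear q -> sublinear (shift q a0).
Proof.
  intros Hq. apply infimum_sublinear.
  - intros v. eexists. apply shift_set_0; auto.
  - intros v. apply shift_set_bounded; auto.
  - intros a b r1 r2 [s1 [Hs1 ->]] [s2 [Hs2 ->]].
    exists (q (vadd (vadd a b) (vscal (s1 + s2) a0)) - (s1 + s2) * q a0). split; [exists (s1 + s2); split; [lra|reflexivity]|].
    rewrite vscal_distr_r, vadd_swap.
    pose proof (proj1 Hq (vadd a (vscal s1 a0)) (vadd b (vscal s2 a0))). lra.
  - intros t a r Ht [s [Hs ->]]. exists (t * (q (vadd a (vscal s a0)) - s * q a0)). split; [|lra].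
    exists (t * s). split; [nra|].
    rewrite <- vscal_assoc, <- vscal_distr_v, (proj2 Hq) by lra. ring.
  - split.
    + exists 0. split; [lra|]. rewrite vscal_0l, vadd_0, sublinear_0 by auto. ring.
    + intros r [s [Hs ->]]. rewrite vadd_0l, (proj2 Hq) by auto. lra.
Qed.

Lemma shift_le q a0 v : sublinear q -> shift q a0 v <= q v.
Proof. intros Hq. apply rglb_le; [apply shift_set_0; auto|apply shift_set_bounded; auto]. Qed.

Lemma shift_at_opp q a0 : sublinear q -> shift q a0 (vopp a0) <= - q a0.
Proof.
  intros Hq. eapply Rle_trans.
  - apply rglb_le; [exists 1; split; [lra|reflexivity]|apply shift_set_bounded; auto].
  - rewrite vscal_1, (vadd_comm (vopp a0)), vadd_opp, sublinear_0 by auto. lra.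
Qed.

Definition minimal_sublinear q : Prop :=
  sublinear q /\ forall q', sublinear q' -> (forall v, q' v <= q v) -> forall v, q v <= q' v.

(* a minimal sublinear functional is linear: by minimality it equals its shift
   along any [a0], whence [q (- a0) = - q a0] *)
Lemma minimal_sublinear_linear q : minimal_sublinear q -> linear_functional q.
Proof.
  intros [Hq Hmin].
  assert (Hneg : forall a, q (vopp a) = - q a).
  { intros a. apply Rle_antisym.
    - eapply Rle_trans; [apply (Hmin (shift q a))|apply shift_at_opp; auto].
      + apply shift_sublinear; auto.
      + intros v; apply shift_le; auto.
    - pose proof (sublinear_opp q (vopp a) Hq). rewrite vopp_opp in H. lra. }
  split.
  - intros a b. apply Rle_antisym; [apply Hq|].
    pose proof (proj1 Hq (vopp a) (vopp b)). rewrite <- vopp_add, !Hneg in H. lra.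
  - intros r a. destruct (Rle_dec 0 r); [apply Hq; auto|].
    replace (vscal r a) with (vscal (-r) (vopp a)) by (rewrite vopp_scal, vscal_assoc; f_equal; ring).
    rewrite (proj2 Hq), Hneg by lra. ring.
Qed.

Definition chain_set p (C : (X -> R) -> Prop) (v : X) (r : R) : Prop :=
  exists q, (q = p \/ C q) /\ r = q v.

Definition chain_inf p (C : (X -> R) -> Prop) (v : X) : R := rglb (chain_set p C v).

Definition dominated p q : Prop := sublinear q /\ forall v, q v <= p v.

Definition above q1 q2 : Prop := forall v, q2 v <= q1 v.

Section ChainInfimum.
Variables (p : X -> R) (C : (X -> R) -> Prop).
Hypothesis Hp : sublinear p.
Hypothesis HC_chain : is_chain above C.
Hypothesis HC_dom : forall q, C q -> dominated p q.

Lemma chain_member_sublinear q : q = p \/ C q -> sublinear q.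
Proof. intros [->|Cq]; [exact Hp|apply HC_dom; auto]. Qed.

Lemma chain_set_bounded v : exists m, forall r, chain_set p C v r -> m <= r.
Proof.
  exists (- p (vopp v)). intros r [q [Hq ->]]. destruct Hq as [->|Cq]; [apply sublinear_opp; auto|].
  destruct (HC_dom q Cq) as [Hq1 Hq2]. pose proof (sublinear_opp q v Hq1). pose proof (Hq2 (vopp v)). lra.
Qed.

Lemma chain_inf_le q v : q = p \/ C q -> chain_inf p C v <= q v.
Proof. intros Hq. apply rglb_le; [exists q; auto|apply chain_set_bounded]. Qed.

(* the infimum of a chain of dominated sublinear functionals is again sublinear;
   it serves as the supremum of the chain in the Bourbaki-Witt argument *)
Lemma chain_inf_sublinear : sublinear (chain_inf p C).
Proof.
  apply infimum_sublinear.
  - intros v. exists (p v), p. auto.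
  - apply chain_set_bounded.
  - intros a b r1 r2 [q1 [Hq1 ->]] [q2 [Hq2 ->]].
    assert (Hcmp : above q1 q2 \/ above q2 q1).
    { destruct Hq1 as [->|C1], Hq2 as [->|C2].
      - left; intros v; lra.
      - left; intros v; apply (HC_dom q2 C2).
      - right; intros v; apply (HC_dom q1 C1).
      - apply HC_chain; auto. }
    pose proof (chain_member_sublinear q1 Hq1) as S1. pose proof (chain_member_sublinear q2 Hq2) as S2.
    destruct Hcmp as [H|H].
    + exists (q2 (vadd a b)). split; [exists q2; auto|]. pose proof (proj1 S2 a b). specialize (H a). lra.
    + exists (q1 (vadd a b)). split; [exists q1; auto|]. pose proof (proj1 S1 a b). specialize (H b). lra.
  - intros t a r Ht [q [Hq ->]]. exists (q (vscal t a)). split; [exists q; auto|].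
    rewrite (proj2 (chain_member_sublinear q Hq)) by lra. lra.
  - split; [exists p; split; [auto|symmetry; apply sublinear_0; auto]|].
    intros r [q [Hq ->]]. rewrite sublinear_0 by (apply chain_member_sublinear; auto). lra.
Qed.

End ChainInfimum.

(* A
   dominated minimal sublinear functional exists by Bourbaki-Witt, applied to the
   map sending a non-minimal functional to a strictly smaller one. *)
Theorem hahn_banach p : sublinear p -> exists phi, linear_functional phi /\ forall v, phi v <= p v.
Proof.
  intros Hp.
  set (smaller := fun q q' => dominated p q' /\ above q q' /\ (q' = q -> minimal_sublinear q)).
  set (next := fun q => epsilon (inhabits p) (smaller q)).
  assert (Hnext : forall q, dominated p q -> smaller q (next q)).
  { intros q Hq. apply epsilon_spec. destruct (classic (minimal_sublinear q)) as [Hm|Hm].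
    - exists q. split; auto. split; [intros v; lra|auto].
    - assert (Hnm : exists q', sublinear q' /\ (forall v, q' v <= q v) /\ exists v, q' v < q v).
      { apply NNPP. intros Hn. apply Hm. split; [apply Hq|]. intros q' H1 H2 v.
        apply Rnot_lt_le. intros Hlt. apply Hn. exists q'. eauto. }
      destruct Hnm as [q' [H1 [H2 [v Hv]]]]. exists q'.
      split; [split; [exact H1|intros w; eapply Rle_trans; [apply H2|apply Hq]]|].
      split; [exact H2|]. intros ->. lra. }
  destruct (bourbaki_witt above (dominated p) p next (chain_inf p)) as [s [Hs Hfix]].
  - intros a v; lra.
  - intros a b c H1 H2 v. specialize (H1 v). specialize (H2 v). lra.
  - intros a b H1 H2. apply functional_extensionality. intros v. specialize (H1 v); specialize (H2 v); lra.
  - split; [exact Hp|intros; lra].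
  - intros a Ha. apply Hnext; auto.
  - intros a Ha v. apply (Hnext a Ha).
  - intros C Hc HC. split; [|split; [|split]].
    + split; [apply chain_inf_sublinear; auto|intros v; apply chain_inf_le; auto].
    + intros v. apply chain_inf_le; auto.
    + intros a Ca v. apply chain_inf_le; auto.
    + intros u Hu Hua v. apply rglb_ge; [exists (p v), p; auto|].
      intros r [q [[->|Cq] ->]]; [apply Hu|apply Hua; auto].
  - exists s. split; [|apply Hs]. apply minimal_sublinear_linear.
    destruct (Hnext s Hs) as [_ [_ Hmin]]. apply Hmin. exact Hfix.
Qed.

End HahnBanach.

(* The functional is a
   Hahn-Banach minorant of the gauge [v |-> inf { ||v - z|| - l eps : z in l D }]. *)
Section Separation.
Context {X : Banach} (D : X -> Prop) (eps : R).
Hypothesis D_convex : forall a b th, D a -> D b -> 0 <= th <= 1 ->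
  D (vadd (vscal th a) (vscal (1 - th) b)).
Hypothesis D_far : forall w, D w -> eps <= vnorm w.

(* [cone z l]: [z] lies in [l D] (with [l >= 0]) *)
Definition cone (z : X) (l : R) : Prop := (z = vzero /\ l = 0) \/ (l > 0 /\ D (vscal (/ l) z)).

Lemma cone_norm z l : cone z l -> l * eps <= vnorm z.
Proof.
  intros [[-> ->]|[Hl Dz]]; [rewrite vnorm_0; lra|].
  specialize (D_far _ Dz). rewrite vnorm_scal, Rabs_right in D_far by (apply Rle_ge, Rlt_le, Rinv_0_lt_compat; lra).
  apply (Rmult_le_compat_l l) in D_far; [|lra]. rewrite <- Rmult_assoc, Rinv_r in D_far by lra. lra.
Qed.

Lemma cone_add z1 l1 z2 l2 : cone z1 l1 -> cone z2 l2 -> cone (vadd z1 z2) (l1 + l2).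
Proof.
  intros [[-> ->]|[H1 D1]] [[-> ->]|[H2 D2]].
  - left. rewrite vadd_0. split; auto; ring.
  - right. rewrite vadd_0l, Rplus_0_l. auto.
  - right. rewrite vadd_0, Rplus_0_r. auto.
  - right. split; [lra|]. set (th := l1 / (l1 + l2)).
    replace (vscal (/ (l1 + l2)) (vadd z1 z2))
      with (vadd (vscal th (vscal (/ l1) z1)) (vscal (1 - th) (vscal (/ l2) z2)))
      by (rewrite vscal_distr_v, !vscal_assoc; unfold th; f_equal; f_equal; field; lra).
    apply D_convex; auto. unfold th. split.
    + apply Rmult_le_pos; [lra|left; apply Rinv_0_lt_compat; lra].
    + apply (Rmult_le_reg_r (l1 + l2)); [lra|]. unfold Rdiv. rewrite Rmult_assoc, Rinv_l; lra.
Qed.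

Lemma cone_scal t z l : 0 < t -> cone z l -> cone (vscal t z) (t * l).
Proof.
  intros Ht [[-> ->]|[Hl Dz]].
  - left. rewrite vscal_0r. split; auto; ring.
  - right. split; [nra|]. rewrite vscal_assoc. replace (/ (t * l) * t) with (/ l) by (field; lra). auto.
Qed.

Definition gauge_set (v : X) (r : R) : Prop :=
  exists z l, cone z l /\ r = vnorm (vsub v z) - l * eps.

Definition gauge (v : X) : R := rglb (gauge_set v).

Lemma gauge_set_norm v : gauge_set v (vnorm v).
Proof. exists vzero, 0. split; [left; auto|]. rewrite vsub_0r. ring. Qed.

Lemma gauge_set_bounded v : exists m, forall r, gauge_set v r -> m <= r.
Proof.
  exists (- vnorm v). intros r [z [l [Hc ->]]]. pose proof (cone_norm z l Hc).
  pose proof (vnorm_sub_ge z v). rewrite vnorm_sub_sym in H0. lra.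
Qed.

Lemma gauge_sublinear : sublinear gauge.
Proof.
  apply infimum_sublinear.
  - intros v. eexists. apply gauge_set_norm.
  - apply gauge_set_bounded.
  - intros a b r1 r2 [z1 [l1 [C1 ->]]] [z2 [l2 [C2 ->]]].
    exists (vnorm (vsub (vadd a b) (vadd z1 z2)) - (l1 + l2) * eps).
    split; [exists (vadd z1 z2), (l1 + l2); split; [apply cone_add; auto|reflexivity]|].
    rewrite vsub_add. pose proof (vnorm_triangle (vsub a z1) (vsub b z2)). lra.
  - intros t a r Ht [z [l [Hc ->]]]. exists (t * (vnorm (vsub a z) - l * eps)). split; [|lra].
    exists (vscal t z), (t * l). split; [apply cone_scal; auto|].
    rewrite vsub_scal, vnorm_scal, Rabs_right by lra. ring.
  - split.
    + exists vzero, 0. split; [left; auto|]. rewrite vsub_diag, vnorm_0. ring.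
    + intros r [z [l [Hc ->]]]. pose proof (cone_norm z l Hc).
      rewrite vnorm_sub_sym, vsub_0r. lra.
Qed.

Lemma gauge_le_norm v : gauge v <= vnorm v.
Proof. apply rglb_le; [apply gauge_set_norm|apply gauge_set_bounded]. Qed.

Lemma gauge_on_D w : D w -> gauge w <= - eps.
Proof.
  intros Dw. eapply Rle_trans; [apply rglb_le; [|apply gauge_set_bounded]|].
  - exists w, 1. split; [right; split; [lra|rewrite Rinv_1, vscal_1; auto]|reflexivity].
  - rewrite vsub_diag, vnorm_0. lra.
Qed.

Theorem separation : exists phi, dual_ball phi /\ forall w, D w -> phi w <= - eps.
Proof.
  destruct (hahn_banach gauge gauge_sublinear) as [phi [Lphi Hphi]].
  exists phi. split; [split; [exact Lphi|]|].
  - intros u. apply Rabs_le. split.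
    + pose proof (Hphi (vopp u)) as H. rewrite vopp_scal, (proj2 Lphi) in H.
      pose proof (gauge_le_norm (vopp u)). rewrite vnorm_opp, vopp_scal in H0. lra.
    + eapply Rle_trans; [apply Hphi|apply gauge_le_norm].
  - intros w Dw. eapply Rle_trans; [apply Hphi|apply gauge_on_D; auto].
Qed.

End Separation.

Section Mazur.
Context {X : Banach} (u : nat -> X).

Definition tail_combination (m : nat) (w : X) : Prop :=
  exists L lam, fin_prob lam L /\ (forall k, (k < m)%nat -> lam k = 0) /\
    w = vsum (fun k => vscal (lam k) (u k)) L.

Definition point_mass (k : nat) : nat -> R := fun j => if Nat.eq_dec j k then 1 else 0.

Lemma point_mass_prob k : fin_prob (point_mass k) k.
Proof.
  unfold point_mass. split; [|split].
  - intros n. destruct (Nat.eq_dec n k); lra.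
  - intros n Hn. destruct (Nat.eq_dec n k); [lia|auto].
  - destruct k; [reflexivity|]. rewrite tech5.
    rewrite (sum_eq _ (fun _ => 0)), sum_cte; [destruct (Nat.eq_dec (S k) (S k)); [ring|lia]|].
    intros i Hi. destruct (Nat.eq_dec i (S k)); [lia|auto].
Qed.

Lemma tail_combination_point m k : (m <= k)%nat -> tail_combination m (u k).
Proof.
  intros Hk. exists k, (point_mass k). split; [apply point_mass_prob|split].
  - intros j Hj. unfold point_mass. destruct (Nat.eq_dec j k); [lia|auto].
  - unfold point_mass. destruct k; cbn [vsum]; [destruct (Nat.eq_dec 0 0); [rewrite vscal_1; auto|lia]|].
    rewrite (vsum_ext _ (fun _ => vscal 0 (u 0%nat))), vsum_const, sum_cte, Rmult_0_l, vscal_0l, vadd_0l.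
    + destruct (Nat.eq_dec (S k) (S k)); [rewrite vscal_1; auto|lia].
    + intros i Hi. destruct (Nat.eq_dec i (S k)); [lia|]. rewrite !vscal_0l. reflexivity.
Qed.

Lemma tail_combination_convex m w1 w2 th : tail_combination m w1 -> tail_combination m w2 ->
  0 <= th <= 1 -> tail_combination m (vadd (vscal th w1) (vscal (1 - th) w2)).
Proof.
  intros [L1 [l1 [[P1 [Q1 S1]] [Z1 ->]]]] [L2 [l2 [[P2 [Q2 S2]] [Z2 ->]]]] Hth.
  set (L := max L1 L2). exists L, (fun k => th * l1 k + (1 - th) * l2 k). split; [|split].
  - split; [|split].
    + intros n. pose proof (P1 n); pose proof (P2 n). nra.
    + intros n Hn. rewrite Q1, Q2 by lia. ring.
    + rewrite plus_sum, <- !sum_scal_l, (sum_tail l1 L1 L), (sum_tail l2 L2 L) by (auto; lia).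
      rewrite S1, S2. ring.
  - intros k Hk. rewrite Z1, Z2 by auto. ring.
  - rewrite <- (vsum_tail (fun k => vscal (l1 k) (u k)) L1 L), <- (vsum_tail (fun k => vscal (l2 k) (u k)) L2 L).
    + rewrite !vsum_scal, <- vsum_add. apply vsum_ext. intros n _.
      rewrite !vscal_assoc, <- vscal_distr_r. reflexivity.
    + intros n Hn. rewrite Q2 by lia. apply vscal_0l.
    + lia.
    + intros n Hn. rewrite Q1 by lia. apply vscal_0l.
    + lia.
Qed.

Theorem mazur (y : X) : weak_cv u y ->
  forall m eps, eps > 0 -> exists w, tail_combination m w /\ vnorm (vsub w y) < eps.
Proof.
  intros Hw m eps Heps. apply NNPP. intros NH.
  set (D := fun d => exists w, tail_combination m w /\ d = vsub w y).
  destruct (separation D eps) as [phi [Hphi Sphi]].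
  - intros a b th [w1 [T1 ->]] [w2 [T2 ->]] Hth.
    exists (vadd (vscal th w1) (vscal (1 - th) w2)). split; [apply tail_combination_convex; auto|].
    rewrite <- !vsub_scal, <- vsub_add, <- vscal_distr_r. replace (th + (1 - th)) with 1 by ring.
    rewrite vscal_1. reflexivity.
  - intros d [w [Tw ->]]. apply Rnot_lt_le. intros H. apply NH. eauto.
  - destruct (Hw phi (dual_ball_bounded phi Hphi) eps Heps) as [N0 HN0].
    specialize (HN0 (max N0 m) ltac:(lia)). unfold R_dist in HN0. apply Rabs_def2 in HN0.
    assert (Dk : D (vsub (u (max N0 m)) y)) by (exists (u (max N0 m)); split; [apply tail_combination_point; lia|auto]).
    specialize (Sphi _ Dk). rewrite linear_sub in Sphi by apply Hphi. lra.
Qed.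

End Mazur.

Fixpoint max_upto (N : nat -> nat) (L : nat) : nat :=
  match L with O => N O | S L' => Nat.max (max_upto N L') (N (S L')) end.

Lemma max_upto_ge N L k : (k <= L)%nat -> (N k <= max_upto N L)%nat.
Proof.
  induction L; intros H; simpl; [replace k with O by lia; lia|].
  destruct (Nat.eq_dec k (S L)) as [->|E]; [lia|]. specialize (IHL ltac:(lia)). lia.
Qed.

Definition compose (c : nat -> nat -> R) (lam : nat -> R) (L : nat) : nat -> R :=
  fun n => sum_f_R0 (fun k => lam k * c k n) L.

Section Compose.
Variables (c : nat -> nat -> R) (N : nat -> nat) (lam : nat -> R) (L : nat).
Hypothesis hc : forall k, fin_prob (c k) (N k).

Lemma compose_sum (a : nat -> R) :
  sum_f_R0 (fun n => compose c lam L n * a n) (max_upto N L) =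
  sum_f_R0 (fun k => lam k * sum_f_R0 (fun n => c k n * a n) (N k)) L.
Proof.
  unfold compose. rewrite (sum_eq _ (fun n => sum_f_R0 (fun k => lam k * c k n * a n) L)).
  2: { intros i _. rewrite Rmult_comm, sum_scal_l. apply sum_eq. intros; ring. }
  rewrite sum_exchange. apply sum_eq. intros k Hk.
  rewrite sum_scal_l, (sum_tail _ (N k) (max_upto N L)).
  - apply sum_eq. intros; ring.
  - intros n Hn. destruct (hc k) as [_ [Z _]]. rewrite Z by lia. ring.
  - apply max_upto_ge; auto.
Qed.

Lemma compose_barycenter {X : Banach} (x : nat -> X) :
  barycenter x (compose c lam L) (max_upto N L) =
  vsum (fun k => vscal (lam k) (barycenter x (c k) (N k))) L.
Proof.
  unfold compose, barycenter.
  rewrite (vsum_ext _ (fun n => vsum (fun k => vscal (lam k * c k n) (x n)) L))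
    by (intros; rewrite vsum_const; reflexivity).
  rewrite vsum_exchange. apply vsum_ext. intros k Hk.
  rewrite vsum_scal, (vsum_tail _ (N k) (max_upto N L)).
  - apply vsum_ext. intros; rewrite vscal_assoc; reflexivity.
  - intros n Hn. destruct (hc k) as [_ [Z _]]. rewrite Z, Rmult_0_r by lia. apply vscal_0l.
  - apply max_upto_ge; auto.
Qed.

Lemma compose_prob : fin_prob lam L -> fin_prob (compose c lam L) (max_upto N L).
Proof.
  intros [P0 [_ P2]]. split; [|split].
  - intros n. apply cond_pos_sum. intros k. destruct (hc k) as [C0 _]. apply Rmult_le_pos; auto.
  - intros n Hn. unfold compose. transitivity (sum_f_R0 (fun _ => 0) L).
    + apply sum_eq. intros k Hk. destruct (hc k) as [_ [C1 _]].
      pose proof (max_upto_ge N L k Hk). rewrite C1 by lia. ring.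
    + rewrite sum_cte. ring.
  - pose proof (compose_sum (fun _ => 1)) as H.
    rewrite (sum_eq _ (compose c lam L)) in H by (intros; ring).
    rewrite H. transitivity (sum_f_R0 lam L); [|exact P2]. apply sum_eq. intros k _. destruct (hc k) as [_ [_ C2]].
    rewrite (sum_eq _ (c k)) by (intros; ring). rewrite C2. ring.
Qed.

End Compose.

Section StrongApproximation.
Context {X : Banach} (x : nat -> X) (f : nat -> X -> R) (y : X)
  (c : nat -> nat -> R) (N : nat -> nat).
Hypothesis hc : forall k, fin_prob (c k) (N k).
Hypothesis hi : weak_cv (fun k => barycenter x (c k) (N k)) y.
Hypothesis hii : Un_cv (fun k => sum_f_R0 (fun n => c k n * f n y) (N k)) 1.

(* Mazur's lemma applied to the barycentres of a tail on which condition (ii)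
   holds up to [eps] yields weights fulfilling (i) in norm and (ii) up to [eps]. *)
Lemma approximating_weights eps : eps > 0 -> exists d M, fin_prob d M /\
  vnorm (vsub (barycenter x d M) y) < eps /\
  Rabs (sum_f_R0 (fun n => d n * f n y) M - 1) <= eps.
Proof.
  intros Heps. destruct (hii eps Heps) as [m Hm].
  destruct (mazur _ y hi m eps Heps) as [w [[L [lam [Hlam [Z ->]]]] Hw]].
  exists (compose c lam L), (max_upto N L). split; [apply compose_prob; auto|split].
  - rewrite compose_barycenter by auto. exact Hw.
  - destruct Hlam as [P0 [_ P2]]. rewrite compose_sum by auto.
    set (s := fun k => sum_f_R0 (fun n => c k n * f n y) (N k)).
    change (Rabs (sum_f_R0 (fun k => lam k * s k) L - 1) <= eps).
    assert (E : sum_f_R0 (fun k => lam k * (s k - 1)) L = sum_f_R0 (fun k => lam k * s k) L - sum_f_R0 lam L).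
    { rewrite <- minus_sum. apply sum_eq. intros; ring. }
    rewrite P2 in E. rewrite <- E.
    eapply Rle_trans; [apply sum_f_R0_triangle|].
    apply Rle_trans with (sum_f_R0 (fun k => lam k * eps) L); [|rewrite <- scal_sum, P2; lra].
    apply sum_Rle. intros k _. rewrite Rabs_mult, Rabs_right by (apply Rle_ge, P0).
    destruct (Nat.lt_ge_cases k m) as [Hk|Hk]; [rewrite Z by exact Hk; lra|].
    apply Rmult_le_compat_l; [apply P0|]. left. apply (Hm k Hk).
Qed.

End StrongApproximation.

Lemma sot_convergence {X : Banach} (x : nat -> X) (f : nat -> X -> R) (y : X) (g : X -> R)
  (d : nat -> nat -> R) (M : nat -> nat)
  (hx : forall n, vnorm (x n) = 1) (hf : forall n, dual_ball (f n))
  (hy : vnorm y = 1) (hg : dual_ball g) (hgy : g y = 1) (hsmooth : gateaux_smooth y)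
  (hd : forall l, fin_prob (d l) (M l))
  (h1 : forall l, vnorm (vsub (barycenter x (d l) (M l)) y) <= / (INR l + 1))
  (h2 : forall l, Rabs (sum_f_R0 (fun n => d l n * f n y) (M l) - 1) <= / (INR l + 1)) :
  sot_cv (fun l => conv_op (d l) (M l) x f) (rank_one g y).
Proof.
  intros v.
  apply (Un_cv_squeeze _ (fun l => Rabs (sum_f_R0 (fun n => d l n * f n y) (M l) - 1))
           (fun l => vnorm (vsub (barycenter x (d l) (M l)) y)) (Rabs (g v)));
    [apply Rabs_pos|intros; apply vnorm_nonneg| | |].
  - apply Un_cv_harmonic. intros l. rewrite Rabs_Rabsolu. apply h2.
  - apply Un_cv_harmonic. intros l. rewrite Rabs_right by apply Rle_ge, vnorm_nonneg. apply h1.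
  - intros eps Heps. destruct (smooth_defect_bound y hsmooth hy g v eps hg hgy Heps) as [K [HK HKb]].
    exists K. split; [exact HK|]. intros l.
    eapply Rle_trans; [apply conv_op_norm_bound; auto|].
    pose proof (weighted_defect_bound f y g hf (d l) (M l) v eps K (hd l) HKb).
    assert (K * (1 - sum_f_R0 (fun n => d l n * f n y) (M l)) <=
            K * Rabs (sum_f_R0 (fun n => d l n * f n y) (M l) - 1)).
    { apply Rmult_le_compat_l; [exact HK|]. rewrite Rabs_minus_sym. apply RRle_abs. }
    lra.
Qed.

Section FlinnPairs.
Context {X : Banach}.

(* [I - sum_n d_n f_n (x) x_n] is the convex combination of the [I - f_n (x) x_n] *)
Lemma conv_op_identity_defect (x : nat -> X) (f : nat -> X -> R) d M v :
  (forall n, flinn_pair (x n) (f n)) -> fin_prob d M -> vnorm v <= 1 ->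
  vnorm (vsub v (conv_op d M x f v)) <= 1.
Proof.
  intros Hfl [D0 [D1 D2]] Hv.
  assert (E : vsub v (conv_op d M x f v) = vsum (fun n => vscal (d n) (vsub v (rank_one (f n) (x n) v))) M).
  { unfold conv_op. rewrite <- (vscal_1 v) at 1. rewrite <- D2, <- vsum_const, vsum_sub.
    apply vsum_ext. intros. rewrite <- vsub_scal. reflexivity. }
  rewrite E. eapply Rle_trans; [apply vsum_norm|]. rewrite <- D2. apply sum_Rle. intros n _.
  rewrite vnorm_scal, Rabs_right by (apply Rle_ge; auto).
  rewrite <- (Rmult_1_r (d n)) at 2. apply Rmult_le_compat_l; auto.
  destruct (Hfl n) as [_ [_ [Hub _]]]. apply Hub. exists v. split; auto.
Qed.

Lemma norm_bound_limit (a b : X) (bs : nat -> X) B : (forall l, vnorm (vsub a (bs l)) <= B) ->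
  Un_cv (fun l => vnorm (vsub (bs l) b)) 0 -> vnorm (vsub a b) <= B.
Proof.
  intros Hl Hcv. apply Rnot_lt_le. intros Hlt.
  destruct (Hcv (vnorm (vsub a b) - B) ltac:(lra)) as [N0 HN0]. specialize (HN0 N0 (le_n _)).
  unfold R_dist in HN0. rewrite Rminus_0_r, Rabs_right in HN0 by (apply Rle_ge, vnorm_nonneg).
  pose proof (vnorm_sub_triangle a (bs N0) b). specialize (Hl N0). lra.
Qed.

(* if [g (x) y] were the identity, [X] would be the line through [y], and every
   rank-one [f0 (x) x0] with [f0 x0 = 1] would be the identity as well *)
Lemma rank_one_identity_unique (g f0 : X -> R) (y x0 : X) :
  linear_functional f0 -> f0 x0 = 1 -> (forall v, v = rank_one g y v) ->
  forall v, v = rank_one f0 x0 v.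
Proof.
  intros Lf0 Hfx Hall v. unfold rank_one in *.
  assert (E1 : f0 v = g v * f0 y) by (rewrite (Hall v) at 1; apply (proj2 Lf0)).
  assert (E2 : g x0 * f0 y = 1) by (rewrite <- Hfx; rewrite (Hall x0) at 2; symmetry; apply (proj2 Lf0)).
  rewrite E1, (Hall x0) at 1. rewrite vscal_assoc.
  replace (g v * f0 y * g x0) with (g v) by (rewrite Rmult_assoc, (Rmult_comm (f0 y)), E2; ring).
  apply Hall.
Qed.

(* [I - g (x) y] has norm at least one as soon as it is nonzero: it is the
   identity on the kernel of [g] *)
Lemma kernel_unit_vector (g : X -> R) (y : X) : linear_functional g -> g y = 1 ->
  (exists v, vsub v (rank_one g y v) <> vzero) ->
  exists u, vnorm u <= 1 /\ vnorm (vsub u (rank_one g y u)) = 1.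
Proof.
  intros Lg Hgy [v Hv]. set (w := vsub v (rank_one g y v)).
  assert (Hgw : g w = 0) by (unfold w, rank_one; rewrite linear_sub, (proj2 Lg), Hgy by auto; ring).
  assert (Hw : vnorm w <> 0) by (intros E; apply vnorm_eq0 in E; auto).
  exists (vscal (/ vnorm w) w). rewrite vnorm_normalize by exact Hw. split; [lra|].
  unfold rank_one. rewrite (proj2 Lg), Hgw, Rmult_0_r, vscal_0l, vsub_0r. apply vnorm_normalize, Hw.
Qed.

Lemma flinn_pair_limit (x : nat -> X) (f : nat -> X -> R) (y : X) (g : X -> R)
  (d : nat -> nat -> R) (M : nat -> nat)
  (hfx : forall n, f n (x n) = 1) (hy : in_sphere y) (hg : bounded_linear g) (hgy : g y = 1)
  (hd : forall l, fin_prob (d l) (M l))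
  (hs : sot_cv (fun l => conv_op (d l) (M l) x f) (rank_one g y)) :
  (forall n, flinn_pair (x n) (f n)) -> flinn_pair y g.
Proof.
  intros Hfl. pose proof (bounded_linear_linear g hg) as Lg.
  split; [exact hy|split; [exact hg|split]].
  - intros t [v [Hv ->]]. apply (norm_bound_limit _ _ (fun l => conv_op (d l) (M l) x f v)); [|apply hs].
    intros l. apply conv_op_identity_defect; auto.
  - intros b Hb.
    assert (Hex : exists v, vsub v (rank_one g y v) <> vzero).
    { apply NNPP. intros H.
      assert (Hall : forall v, v = rank_one g y v).
      { intros v. apply vsub_eq0. apply NNPP. intros H2. apply H. eauto. }
      destruct (Hfl 0%nat) as [_ [Hf0 [_ Hlub]]].
      assert (Hz : 1 <= 0).
      { apply Hlub. intros t [v [_ ->]].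
        rewrite <- (rank_one_identity_unique g (f 0%nat) y (x 0%nat) (bounded_linear_linear _ Hf0) (hfx 0%nat) Hall v).
        rewrite vsub_diag, vnorm_0. lra. }
      lra. }
    destruct (kernel_unit_vector g y Lg hgy Hex) as [u [Hu Hu1]].
    apply Hb. exists u. split; [exact Hu|symmetry; exact Hu1].
Qed.

End FlinnPairs.

Theorem lemma2p3 (X : Banach) (x : nat -> X) (f : nat -> X -> R)
  (y : X) (g : X -> R) (c : nat -> nat -> R) (N : nat -> nat)
  (hx : forall n, in_sphere (x n)) (hf : forall n, in_dual_sphere (f n))
  (hfx : forall n, f n (x n) = 1)
  (hy : in_sphere y) (hg : in_dual_sphere g) (hgy : g y = 1)
  (hsmooth : gateaux_smooth y)
  (hc : forall k, fin_prob (c k) (N k))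
  (hi : weak_cv (fun k => vsum (fun n => vscal (c k n) (x n)) (N k)) y)
  (hii : Un_cv (fun k => sum_f_R0 (fun n => c k n * f n y) (N k)) 1) :
  wot_cv (fun k => conv_op (c k) (N k) x f) (rank_one g y) /\
  (exists (d : nat -> nat -> R) (M : nat -> nat),
     (forall l, fin_prob (d l) (M l)) /\
     sot_cv (fun l => conv_op (d l) (M l) x f) (rank_one g y)) /\
  ((forall n, flinn_pair (x n) (f n)) -> flinn_pair y g).
Proof.
  pose proof (dual_sphere_ball g hg) as Bg.
  assert (Bf : forall n, dual_ball (f n)) by (intros n; apply dual_sphere_ball, hf).
  assert (Hweights : forall l : nat, exists dM : (nat -> R) * nat, fin_prob (fst dM) (snd dM) /\
     vnorm (vsub (barycenter x (fst dM) (snd dM)) y) <= / (INR l + 1) /\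
     Rabs (sum_f_R0 (fun n => fst dM n * f n y) (snd dM) - 1) <= / (INR l + 1)).
  { intros l. destruct (approximating_weights x f y c N hc hi hii (/ (INR l + 1))) as [d [M [H1 [H2 H3]]]].
    { apply Rinv_0_lt_compat. pose proof (pos_INR l). lra. }
    exists (d, M). split; [exact H1|split; [simpl; lra|exact H3]]. }
  destruct (choice _ Hweights) as [dM HdM].
  set (d := fun l => fst (dM l)). set (M := fun l => snd (dM l)).
  assert (Hd : forall l, fin_prob (d l) (M l)) by (intros l; apply HdM).
  assert (Hsot : sot_cv (fun l => conv_op (d l) (M l) x f) (rank_one g y))
    by (apply sot_convergence; auto; intros l; apply HdM).
  split; [|split].
  - apply wot_convergence; auto.
  - exists d, M. auto.
  - apply (flinn_pair_limit x f y g d M); auto. apply hg.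
Qed.
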